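(* Let $S\subseteq\mathcal S_d$ be nonempty, $[d]$ partitioned into groups $G_1,\dots,G_g$, $\bar\alpha,\bar\beta\in[0,1]^g$, $k\in[d]$, and assume the set $\mathcal F$ of $(\bar\alpha,\bar\beta)$-$k$-fair rankings in $\mathcal S_d$ is nonempty. Let $\tau$ be an $(\bar\alpha,\bar\beta)$-$k$-fair top-$k$ ranking minimizing $2\sum_{\pi\in S}\sum_{i\in D_\tau}(\pi(i)-\tau(i))\mathbb{1}[\tau(i)<\pi(i)]$, and let $\sigma\in\mathcal S_d$ be a ranking with $\sigma(a)=\tau(a)$ for all $a\in D_\tau$ minimizing $2\sum_{\pi\in S}\sum_{i\in[d]}(\pi(i)-\sigma(i))\mathbb{1}[\sigma(i)<\pi(i)]$ among such extensions. Then $\sigma\in\mathcal F$ and $\sum_{\pi\in S}\kappa(\pi,\sigma)\le 4\min_{\sigma'\in\mathcal F}\sum_{\pi\in S}\kappa(\pi,\sigma')$.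
   Context: $\mathcal{S}_d$ is the set of rankings of $[d]$, $\pi(a)$ the rank of $a$. A top-$k$ ranking is a bijection $\tau:D_\tau\to[k]$, $D_\tau\subseteq[d]$. A full or top-$k$ ranking is $(\bar\alpha,\bar\beta)$-$k$-fair if for every $i\in[g]$ its top $k$ positions contain at least $\lfloor\alpha_i k\rfloor$ and at most $\lceil\beta_i k\rceil$ members of $G_i$. $\kappa(\pi,\sigma)$ is the Kendall-tau distance: the number of unordered pairs $\{a,b\}$ ordered differently by $\pi$ and $\sigma$. $\mathbb{1}[\cdot]$ is the indicator function. *)

From mathcomp Require Import all_boot all_order all_algebra all_fingroup.
From mathcomp Require Import reals.
Set Implicit Arguments. Unset Strict Implicit. Unset Printing Implicit Defensive.
Import Order.TTheory GRing.Theory Num.Theory.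
Local Open Scope ring_scope.

(* Rankings of [d] = {perm 'I_d}; pi a (as a nat) is the rank of a,
   ranks are 0-based: position p of the paper is p.-1 here. *)

Definition fair_count (R : realType) (k c : nat) (a b : R) : bool :=
  (Num.floor (a * k%:R) <= c%:Z) && (c%:Z <= Num.ceil (b * k%:R)).

Definition fair_rank (R : realType) (d g k : nat) (grp : 'I_d -> 'I_g)
  (alpha beta : 'I_g -> R) (pi : {perm 'I_d}) : bool :=
  [forall i : 'I_g,
     fair_count k #|[set a : 'I_d | (grp a == i) && (pi a < k)%N]| (alpha i) (beta i)].

(* A top-k ranking tau : D_tau -> [k] is represented by its inverse
   pos : 'I_k -> 'I_d, injective, pos j = the element of rank j;
   D_tau = image of pos, and tau (pos j) = j. *)
Definition topk (d k : nat) (pos : 'I_k -> 'I_d) : Prop := injective pos.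

Definition fair_topk (R : realType) (d g k : nat) (grp : 'I_d -> 'I_g)
  (alpha beta : 'I_g -> R) (pos : 'I_k -> 'I_d) : bool :=
  [forall i : 'I_g,
     fair_count k #|[set j : 'I_k | grp (pos j) == i]| (alpha i) (beta i)].

Definition cost_topk (d k : nat) (S : {set {perm 'I_d}}) (pos : 'I_k -> 'I_d) : nat :=
  (2 * \sum_(pi in S) \sum_(j : 'I_k)
      ((pi (pos j) - j) * (j < pi (pos j))))%N.

Definition cost_full (d : nat) (S : {set {perm 'I_d}}) (sigma : {perm 'I_d}) : nat :=
  (2 * \sum_(pi in S) \sum_(i : 'I_d)
      ((pi i - sigma i) * (sigma i < pi i)))%N.

Definition extends (d k : nat) (pos : 'I_k -> 'I_d) (sigma : {perm 'I_d}) : bool :=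
  [forall j : 'I_k, (sigma (pos j) : nat) == (j : nat)].

Definition kendall (d : nat) (pi sigma : {perm 'I_d}) : nat :=
  #|[set p : 'I_d * 'I_d | (p.1 < p.2)%N &&
       ((pi p.1 < pi p.2)%N != (sigma p.1 < sigma p.2)%N)]|.

Definition kcost (d : nat) (S : {set {perm 'I_d}}) (sigma : {perm 'I_d}) : nat :=
  (\sum_(pi in S) kendall pi sigma)%N.

From mathcomp Require Import all_boot all_order all_algebra all_fingroup.
From mathcomp Require Import reals.
From mathcomp Require Import zify.
Import Order.TTheory GRing.Theory Num.Theory.
Set Implicit Arguments. Unset Strict Implicit. Unset Printing Implicit Defensive.

(* Write P(pi, s) = sum_i (pi(i) - s(i))^+ for the displacement of s against pi;
   the costs minimized by tau and by sigma are 2 sum_S P restricted to the top k,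
   resp. 2 sum_S P.  Counting inversions element by element gives
   P <= kendall <= 2 P.  Fairness of a full ranking depends only on its top k, so
   sigma is fair and the top k of any fair s is a fair top-k ranking, whence
   P_top(sigma) <= P_top(s).  Keeping the top k of sigma and ordering the other
   elements as s does yields an extension r of tau with
   P(r) <= P_top(sigma) + P(s) <= 2 P(s).  Hence
   kendall(sigma) <= 2 P(sigma) <= 2 P(r) <= 4 P(s) <= 4 kendall(s). *)

Lemma sum_ord_interval (d a b : nat) :
  \sum_(t < d) (a <= t < b : nat) = minn b d - a.
Proof.
elim: d => [|d IH]; first by rewrite big_ord0 minn0.
by rewrite big_ord_recr /= IH; case: (leqP b d) => hb; case: (leqP a d) => ha /=; lia.
Qed.

Lemma subn_mul_ltn (a b : nat) : (a - b) * (b < a) = a - b.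
Proof. by case: ltnP => h; rewrite ?muln1 // muln0; apply/esym/eqP; rewrite subn_eq0. Qed.

Lemma leq_nat_of_bool (b c : bool) : (b -> c) -> (b : nat) <= c.
Proof. by case: b; case: c => // ->. Qed.

Lemma card_set_sum (T : finType) (P : pred T) : #|[set x | P x]| = \sum_x (P x : nat).
Proof. by rewrite -sum1dep_card big_mkcond; apply: eq_bigr => x _; case: (P x). Qed.

Lemma card_set_pairs_sum (T : finType) (P : T -> T -> bool) :
  #|[set p : T * T | P p.1 p.2]| = \sum_x \sum_y (P x y : nat).
Proof. by rewrite card_set_sum pair_big. Qed.

Lemma sum_nat_eq1 (T : finType) (a : T) : \sum_x (x == a : nat) = 1.
Proof. by rewrite (bigD1 a) //= eqxx big1 // => b /negbTE ->. Qed.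

Section PermCounting.
Variables (d : nat) (s : {perm 'I_d}).

Lemma sum_perm_ltn n : n <= d -> \sum_b (s b < n : nat) = n.
Proof.
move=> hn; rewrite (reindex_inj (@perm_inj _ s^-1)) /=.
transitivity (\sum_(t < d) (0 <= t < n : nat)).
  by apply: eq_bigr => b _; rewrite permKV.
by rewrite sum_ord_interval (minn_idPl hn) subn0.
Qed.

Lemma eqn_perm x y : (s x == s y :> nat) = (x == y :> nat).
Proof. by rewrite !val_eqE (inj_eq perm_inj). Qed.

End PermCounting.

Section KendallDisplacement.
Variables (d : nat) (pi s : {perm 'I_d}).

Definition inv_after x := \sum_y ((s x < s y) && (pi y < pi x) : nat).
Definition inv_before x := \sum_y ((s y < s x) && (pi x < pi y) : nat).

(* Positive parts of the displacements, by truncated subtraction. *)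
Definition displacement := \sum_i (pi i - s i).

Lemma eqn_perms x y : (pi x == pi y :> nat) = (s x == s y :> nat).
Proof. by rewrite !eqn_perm. Qed.

(* Both sides count the elements ranked before [x] by [pi] or by [s]. *)
Lemma inv_balance x : pi x + inv_before x = s x + inv_after x.
Proof.
rewrite -{1}(sum_perm_ltn pi (ltnW (ltn_ord (pi x)))).
rewrite -{1}(sum_perm_ltn s (ltnW (ltn_ord (s x)))).
rewrite /inv_before /inv_after -!big_split /=; apply: eq_bigr => y _.
move: (eqn_perms y x).
by case: (ltngtP (pi y) (pi x)); case: (ltngtP (s y) (s x)).
Qed.

Lemma kendall_inv_after : kendall pi s = \sum_x inv_after x.
Proof.
rewrite /kendall (card_set_pairs_sum
  (fun x y : 'I_d => (x < y) && ((pi x < pi y) != (s x < s y)))).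
transitivity (\sum_(x : 'I_d) \sum_(y : 'I_d)
    ((x < y) && ((s x < s y) && (pi y < pi x)) : nat)
  + \sum_(x : 'I_d) \sum_(y : 'I_d) ((x < y) && ((s y < s x) && (pi x < pi y)) : nat)).
  rewrite -big_split; apply: eq_bigr => x _; rewrite -big_split; apply: eq_bigr => y _ /=.
  move: (eqn_perms x y) (eqn_perm s x y).
  by case: (ltngtP x y); case: (ltngtP (pi x) (pi y)); case: (ltngtP (s x) (s y)).
rewrite [X in _ + X]exchange_big -big_split; apply: eq_bigr => x _.
rewrite -big_split; apply: eq_bigr => y _ /=; move: (eqn_perm s x y).
by case: (ltngtP x y); case: (ltngtP (s x) (s y)); case: (pi y < pi x).
Qed.

Lemma displacement_le_kendall : displacement <= kendall pi s.
Proof.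
rewrite kendall_inv_after; apply: leq_sum => x _.
by have := inv_balance x; lia.
Qed.

End KendallDisplacement.

Definition crossing d (pi s : {perm 'I_d}) t := \sum_y (s y <= t < pi y : nat).

Lemma crossing_sym d (pi s : {perm 'I_d}) t : t < d -> crossing s pi t = crossing pi s t.
Proof.
move=> td; apply/eqP; rewrite -(eqn_add2l t.+1); apply/eqP.
rewrite -{1}(sum_perm_ltn s td) -{2}(sum_perm_ltn pi td) /crossing -!big_split /=.
by apply: eq_bigr => y _; rewrite !ltnS; case: (leqP (pi y) t); case: (leqP (s y) t).
Qed.

Lemma sum_crossing d (pi s : {perm 'I_d}) : \sum_(t < d) crossing pi s t = displacement pi s.
Proof.
rewrite /crossing exchange_big; apply: eq_bigr => y _.
by rewrite sum_ord_interval (minn_idPl (ltnW (ltn_ord _))).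
Qed.

Lemma inv_after_le_crossing d (pi s : {perm 'I_d}) x :
  inv_after pi s x <= (pi x - s x) + crossing pi s (pi x).
Proof.
have := inv_balance pi s x; case: (ltnP (s x) (pi x)) => hx.
  suff : inv_before pi s x <= crossing pi s (pi x) by lia.
  apply: leq_sum => y _; apply: leq_nat_of_bool => /andP [hs hpi].
  by rewrite hpi andbT ltnW // (ltn_trans hs).
rewrite -crossing_sym // (_ : pi x - s x = 0); last by apply/eqP; rewrite subn_eq0.
move=> _; apply: leq_sum => y _; apply: leq_nat_of_bool => /andP [hs hpi].
by rewrite ltnW //= (leq_ltn_trans hx).
Qed.

Lemma kendall_le_displacement d (pi s : {perm 'I_d}) :
  kendall pi s <= 2 * displacement pi s.
Proof.
rewrite kendall_inv_after mul2n -addnn -{2}(sum_crossing pi s).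
rewrite [X in _ <= _ + X](reindex_inj (@perm_inj _ pi)) /= -big_split /=.
by apply: leq_sum => x _; exact: inv_after_le_crossing.
Qed.

Definition top_displacement d k (pi s : {perm 'I_d}) := \sum_(i | s i < k) (pi i - s i).

Lemma top_displacement_le d k (pi s : {perm 'I_d}) :
  top_displacement k pi s <= displacement pi s.
Proof. by rewrite /displacement (bigID (fun i => s i < k)) leq_addr. Qed.

Lemma cost_fullE d (S : {set {perm 'I_d}}) s :
  cost_full S s = 2 * \sum_(pi in S) displacement pi s.
Proof.
by congr (2 * _); apply: eq_bigr => pi _; apply: eq_bigr => i _; rewrite subn_mul_ltn.
Qed.

Lemma extendsP d k (pos : 'I_k -> 'I_d) (s : {perm 'I_d}) :
  reflect (forall j, s (pos j) = j :> nat) (extends pos s).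
Proof. by apply: (iffP forallP) => h j; apply/eqP. Qed.

Section Extends.
Variables (d k : nat) (pos : 'I_k -> 'I_d) (s : {perm 'I_d}).
Hypothesis pos_s : extends pos s.

Lemma extends_rank j : s (pos j) = j :> nat.
Proof. exact: (elimT (extendsP _ _) pos_s). Qed.

Lemma extends_topk : topk pos.
Proof. by move=> j j' e; apply: ord_inj; rewrite -extends_rank e extends_rank. Qed.

Lemma sum_extends (F : 'I_d -> nat) : \sum_j F (pos j) = \sum_(i | s i < k) F i.
Proof.
rewrite -(big_imset _ (in2W extends_topk)) /=.
apply: eq_bigl => i; apply/imsetP/idP => [[j _ ->]|hi].
  by rewrite extends_rank.
exists (Ordinal hi) => //; apply: (@perm_inj _ s); apply: ord_inj.
by rewrite extends_rank.
Qed.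

Lemma fair_topk_extends (R : realType) g grp (alpha beta : 'I_g -> R) :
  fair_topk grp alpha beta pos = fair_rank k grp alpha beta s.
Proof.
apply: eq_forallb => i; congr (fair_count _ _ _ _).
rewrite !card_set_sum (sum_extends (fun a => (grp a == i : nat))) big_mkcond.
by apply: eq_bigr => a _; case: (s a < k); rewrite ?andbT ?andbF.
Qed.

Lemma cost_topk_extends (S : {set {perm 'I_d}}) :
  cost_topk S pos = 2 * \sum_(pi in S) top_displacement k pi s.
Proof.
congr (2 * _); apply: eq_bigr => pi _.
rewrite /top_displacement -(sum_extends (fun i => pi i - s i)); apply: eq_bigr => j _.
by rewrite subn_mul_ltn extends_rank.
Qed.

End Extends.

Definition perm_prefix d k (kd : k <= d) (s : {perm 'I_d}) (j : 'I_k) :=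
  (s^-1)%g (widen_ord kd j).

Lemma extends_perm_prefix d k (kd : k <= d) s : extends (perm_prefix kd s) s.
Proof. by apply/extendsP => j; rewrite /perm_prefix permKV. Qed.

Section MergeTop.
Variables (d k : nat) (s t : {perm 'I_d}).
Hypothesis kd : k <= d.

Definition bottom_rank a := \sum_b ((k <= s b) && (t b < t a) : nat).

Lemma sum_bottom : \sum_b (k <= s b : nat) = d - k.
Proof.
rewrite -[in RHS](sum_perm_ltn s kd) -[X in X - _](sum_perm_ltn s (leqnn d)).
rewrite -sumnB => [|b _]; last by case: (s b < k); rewrite ?ltn_ord.
by apply: eq_bigr => b _; rewrite ltn_ord; case: ltnP.
Qed.

Lemma bottom_rank_lt a : k <= s a -> bottom_rank a < d - k.
Proof.
move=> ha; rewrite -sum_bottom -addn1 -(sum_nat_eq1 a) -big_split /=.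
apply: leq_sum => b _; case: (eqVneq b a) => [->|_]; first by rewrite ltnn andbF ha.
by rewrite addn0; apply: leq_nat_of_bool => /andP [].
Qed.

Lemma bottom_rank_mono a a' : k <= s a -> t a < t a' -> bottom_rank a < bottom_rank a'.
Proof.
move=> ha lt_aa'; rewrite -addn1 -(sum_nat_eq1 a) -big_split /=.
apply: leq_sum => b _; case: (eqVneq b a) => [->|_]; first by rewrite ltnn andbF ha lt_aa'.
rewrite addn0; apply: leq_nat_of_bool => /andP [-> /= lt_ba].
exact: ltn_trans lt_ba lt_aa'.
Qed.

Lemma leq_rank_bottom_rank a : t a <= k + bottom_rank a.
Proof.
rewrite -{1}(sum_perm_ltn t (ltnW (ltn_ord (t a)))) -{1}(sum_perm_ltn s kd) -big_split /=.
by apply: leq_sum => b _; case: (ltnP (s b) k) => //= _; case: (t b < t a).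
Qed.

Definition merge_rank a : nat := if s a < k then nat_of_ord (s a) else k + bottom_rank a.

Lemma merge_rank_lt a : merge_rank a < d.
Proof.
rewrite /merge_rank; case: ifPn => [_|]; first exact: ltn_ord.
by rewrite -leqNgt => /bottom_rank_lt; lia.
Qed.

Lemma merge_rank_inj : injective (fun a => Ordinal (merge_rank_lt a)).
Proof.
move=> a a' /(congr1 val) /=; rewrite /merge_rank.
case: ifPn => ha; case: ifPn => ha'; rewrite -?leqNgt in ha ha'; try lia.
  by move=> e; apply: (@perm_inj _ s); apply: ord_inj.
move=> /addnI e; case: (ltngtP (t a) (t a')) => [lt|lt|/val_inj/perm_inj //].
  by have := bottom_rank_mono ha lt; rewrite e ltnn.
by have := bottom_rank_mono ha' lt; rewrite e ltnn.
Qed.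

(* Keeps the top [k] of [s] and ranks the remaining elements in the order of [t]. *)
Definition merge_top : {perm 'I_d} := perm merge_rank_inj.

Lemma merge_top_top a : s a < k -> merge_top a = s a :> nat.
Proof. by rewrite permE /= /merge_rank => ->. Qed.

Lemma merge_top_bottom a : k <= s a -> t a <= merge_top a.
Proof. by rewrite permE /= /merge_rank ltnNge => ->; exact: leq_rank_bottom_rank. Qed.

Lemma extends_merge_top (pos : 'I_k -> 'I_d) : extends pos s -> extends pos merge_top.
Proof.
move=> pos_s; apply/extendsP => j.
by rewrite merge_top_top (extends_rank pos_s) // ltn_ord.
Qed.

Lemma displacement_merge_top pi :
  displacement pi merge_top <= top_displacement k pi s + displacement pi t.
Proof.
rewrite /displacement (bigID (fun i => s i < k)) /=; apply: leq_add.
  by apply: eq_leq; apply: eq_bigr => i /merge_top_top ->.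
apply: (@leq_trans (\sum_(i | ~~ (s i < k)) (pi i - t i))).
  by apply: leq_sum => i; rewrite -leqNgt => /merge_top_bottom; exact: leq_sub2l.
by rewrite [X in _ <= X](bigID (fun i => ~~ (s i < k))) leq_addr.
Qed.

End MergeTop.

Lemma kcost_le_displacement d (S : {set {perm 'I_d}}) s :
  kcost S s <= 2 * \sum_(pi in S) displacement pi s.
Proof. by rewrite big_distrr; apply: leq_sum => pi _; exact: kendall_le_displacement. Qed.

Lemma displacement_le_kcost d (S : {set {perm 'I_d}}) s :
  \sum_(pi in S) displacement pi s <= kcost S s.
Proof. by apply: leq_sum => pi _; exact: displacement_le_kendall. Qed.

Lemma kcost_extension_le d k (kd : k <= d) (S : {set {perm 'I_d}})
    (pos : 'I_k -> 'I_d) (sigma s : {perm 'I_d}) :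
  extends pos sigma ->
  (forall sigma', extends pos sigma' -> cost_full S sigma <= cost_full S sigma') ->
  \sum_(pi in S) top_displacement k pi sigma <= \sum_(pi in S) top_displacement k pi s ->
  kcost S sigma <= 4 * kcost S s.
Proof.
move=> ext_sigma sigma_min top_le.
have le_merge : \sum_(pi in S) displacement pi sigma
             <= \sum_(pi in S) displacement pi (merge_top sigma s kd).
  by have := sigma_min _ (extends_merge_top s kd ext_sigma); rewrite !cost_fullE leq_pmul2l.
have merge_le : \sum_(pi in S) displacement pi (merge_top sigma s kd)
    <= \sum_(pi in S) top_displacement k pi sigma + \sum_(pi in S) displacement pi s.
  by rewrite -big_split; apply: leq_sum => pi _; exact: displacement_merge_top.
have top_s_le : \sum_(pi in S) top_displacement k pi s <= \sum_(pi in S) displacement pi s.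
  by apply: leq_sum => pi _; exact: top_displacement_le.
have := kcost_le_displacement S sigma; have := displacement_le_kcost S s; lia.
Qed.

Local Open Scope ring_scope.

Theorem mainTheorem8 (R : realType) (d g k : nat)
  (S : {set {perm 'I_d}}) (grp : 'I_d -> 'I_g) (alpha beta : 'I_g -> R)
  (pos : 'I_k -> 'I_d) (sigma : {perm 'I_d}) :
  S != set0 ->
  (forall i, 0 <= alpha i <= 1) -> (forall i, 0 <= beta i <= 1) ->
  (1 <= k)%N -> (k <= d)%N ->
  (exists pi : {perm 'I_d}, fair_rank k grp alpha beta pi) ->
  topk pos -> fair_topk grp alpha beta pos ->
  (forall pos' : 'I_k -> 'I_d, topk pos' -> fair_topk grp alpha beta pos' ->
     (cost_topk S pos <= cost_topk S pos')%N) ->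
  extends pos sigma ->
  (forall sigma' : {perm 'I_d}, extends pos sigma' ->
     (cost_full S sigma <= cost_full S sigma')%N) ->
  fair_rank k grp alpha beta sigma /\
  (forall sigma' : {perm 'I_d}, fair_rank k grp alpha beta sigma' ->
     (kcost S sigma <= 4 * kcost S sigma')%N).
Proof.
move=> _ _ _ _ kd _ _ fair_pos pos_min ext_sigma sigma_min.
split; first by rewrite -(fair_topk_extends ext_sigma grp).
move=> s fair_s; apply: (kcost_extension_le kd ext_sigma sigma_min).
have ext_s := extends_perm_prefix kd s.
have := pos_min _ (extends_topk ext_s); rewrite (fair_topk_extends ext_s grp) => /(_ fair_s).
by rewrite (cost_topk_extends ext_sigma) (cost_topk_extends ext_s) leq_pmul2l.
Qed.
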